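(* For every formula $A$ of $\mathbf{L_1}$: $\vdash_{\mathbf{HL_1}}A$ if and only if $\dashv_H A$ (i.e. $A$ is a theorem of $\mathbf{HAR}$).
   Context: Formulas of $\mathbf{L_1}$: built from atomic formulas $\epsilon ab$ ($a,b$ name variables, possibly equal) with primitive connectives $\vee,\sim$; $\wedge,\supset,\equiv$ defined as usual. Disjunctions may be associated in any way. $\vdash_H A$: $A$ belongs to the smallest set containing all instances of classical propositional tautologies and all formulas $\epsilon ab\supset\epsilon aa$, $(\epsilon ab\wedge\epsilon bc)\supset\epsilon ac$, $(\epsilon ab\wedge\epsilon bb)\supset\epsilon ba$, closed under modus ponens. Positive/negative parts (occurrences): $A$ is a positive part of $A$; if $B\vee C$ is a positive part then $B,C$ are positive parts; if $\sim B$ is a positive part then $B$ is a negative part; if $\sim B$ is a negative part then $B$ is a positive part. $F[B_+,B_-]$ denotes a formula in which some $B$ has one occurrence as positive part and another non-overlapping occurrence as negative part. Hintikka formula: a formula $H$ such that (1) $H$ is not of the form $F[B_+,B_-]$; (2) if $B\vee C$ is a negative part of $H$ then $B$ or $C$ is; (3) if $\epsilon ab$ is a negative part then so is $\epsilon aa$; (4) if $\epsilon ab,\epsilon bc$ are negative parts then so is $\epsilon ac$; (5) if $\epsilon ab,\epsilon bb$ are negative parts then so is $\epsilon ba$. $\mathbf{HAR}$: fix a name variable $a_0$; $\dashv_H$ is the smallest set such that $\dashv_H\epsilon a_0a_0$; $\dashv_H\sim\epsilon a_0a_0$; if $\vdash_H A\supset B$ and $\dashv_H B$ then $\dashv_H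 A$; if $\dashv_H A$ and $A$ is obtained from $B$ by uniform substitution of name variables for name variables then $\dashv_H B$; if $A$ is a Hintikka formula that is a disjunction of atomic or negated atomic formulas, $\dashv_H A$, and $\epsilon ab$ is not a negative part of $A$, then $\dashv_H A\vee\epsilon ab$. $\mathbf{HL_1}$: $\vdash_{\mathbf{HL_1}}$ is the smallest set of formulas containing every Hintikka formula and such that $\vdash_H A\supset B$ and $\vdash_{\mathbf{HL_1}}B$ imply $\vdash_{\mathbf{HL_1}}A$. *)

From Stdlib Require Import List Bool.
Import ListNotations.

Definition name := nat.

Inductive formula : Type :=
| Eps : name -> name -> formula
| Or  : formula -> formula -> formula
| Not : formula -> formula.

Definition Imp (A B : formula) : formula := Or (Not A) B.
Definition And (A B : formula) : formula := Not (Or (Not A) (Not B)).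
Definition Iff (A B : formula) : formula := And (Imp A B) (Imp B A).

Fixpoint eval (v : name -> name -> bool) (A : formula) : bool :=
  match A with
  | Eps a b => v a b
  | Or B C => eval v B || eval v C
  | Not B => negb (eval v B)
  end.

Definition tautology (A : formula) : Prop := forall v, eval v A = true.

Inductive provH : formula -> Prop :=
| H_taut : forall A, tautology A -> provH A
| H_ax1 : forall a b, provH (Imp (Eps a b) (Eps a a))
| H_ax2 : forall a b c, provH (Imp (And (Eps a b) (Eps b c)) (Eps a c))
| H_ax3 : forall a b, provH (Imp (And (Eps a b) (Eps b b)) (Eps b a))
| H_mp : forall A B, provH (Imp A B) -> provH A -> provH B.

(* Occurrences of parts are addressed by paths from the root. *)
Inductive dir : Type := dL | dR | dN.

(* [sub pos A p] : the subformula reached from A along path p, provided every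
   step is licensed by the positive/negative-part rules (A itself having
   polarity [pos], true = positive), together with its polarity. *)
Fixpoint sub (pos : bool) (A : formula) (p : list dir) : option (formula * bool) :=
  match p with
  | [] => Some (A, pos)
  | d :: p' =>
      match d, A with
      | dL, Or B _ => if pos then sub pos B p' else None
      | dR, Or _ C => if pos then sub pos C p' else None
      | dN, Not B => sub (negb pos) B p'
      | _, _ => None
      end
  end.

Definition pos_part (A B : formula) : Prop :=
  exists p, sub true A p = Some (B, true).
Definition neg_part (A B : formula) : Prop :=
  exists p, sub true A p = Some (B, false).

Fixpoint is_prefix (p q : list dir) : Prop :=
  match p, q with
  | [], _ => True
  | d :: p', e :: q' => d = e /\ is_prefix p' q'
  | _ :: _, [] => False
  end.

(* A is of the form F[B_+, B_-]. *)
Definition has_pos_neg (A : formula) : Prop :=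
  exists B p q,
    sub true A p = Some (B, true) /\ sub true A q = Some (B, false) /\
    ~ is_prefix p q /\ ~ is_prefix q p.

Definition hintikka (H : formula) : Prop :=
  ~ has_pos_neg H /\
  (forall B C, neg_part H (Or B C) -> neg_part H B \/ neg_part H C) /\
  (forall a b, neg_part H (Eps a b) -> neg_part H (Eps a a)) /\
  (forall a b c, neg_part H (Eps a b) -> neg_part H (Eps b c) ->
                 neg_part H (Eps a c)) /\
  (forall a b, neg_part H (Eps a b) -> neg_part H (Eps b b) ->
               neg_part H (Eps b a)).

Inductive literal : formula -> Prop :=
| lit_pos : forall a b, literal (Eps a b)
| lit_neg : forall a b, literal (Not (Eps a b)).

Inductive lit_disj : formula -> Prop :=
| ld_lit : forall A, literal A -> lit_disj A
| ld_or : forall A B, lit_disj A -> lit_disj B -> lit_disj (Or A B).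

Fixpoint subst (s : name -> name) (A : formula) : formula :=
  match A with
  | Eps a b => Eps (s a) (s b)
  | Or B C => Or (subst s B) (subst s C)
  | Not B => Not (subst s B)
  end.

Inductive refH (a0 : name) : formula -> Prop :=
| R_ax1 : refH a0 (Eps a0 a0)
| R_ax2 : refH a0 (Not (Eps a0 a0))
| R_mp : forall A B, provH (Imp A B) -> refH a0 B -> refH a0 A
| R_subst : forall A B (s : name -> name),
    refH a0 A -> A = subst s B -> refH a0 B
| R_ext : forall A a b,
    hintikka A -> lit_disj A -> refH a0 A -> ~ neg_part A (Eps a b) ->
    refH a0 (Or A (Eps a b)).

Inductive provHL1 : formula -> Prop :=
| HL1_hint : forall A, hintikka A -> provHL1 A
| HL1_back : forall A B, provH (Imp A B) -> provHL1 B -> provHL1 A.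

From Stdlib Require Import List Bool Lia ClassicalEpsilon.
Import ListNotations.

(* Both systems are characterised by one semantic notion.  A valuation of the
   atomic formulas is admissible when it validates the three ontological
   axioms of H, and A is invalid when some admissible valuation falsifies it.

   1. Soundness: every H-theorem is true under every admissible valuation, so
      invalidity propagates backwards along H-provable implications.
   2. A Hintikka formula is falsified by its canonical valuation (eps a b true
      iff eps a b is a negative part); this valuation is admissible.  Hence
      every HL1-theorem and every HAR-theorem is invalid.
   3. Diagram lemma: if A is falsified by an admissible v, the disjunction H of
      the literals "v is false here" over the names of A is a Hintikka formula,
      A -> H is a tautology, and H is refutable in HAR: its negative literals
      form a refutable base, and the positive literals are added one by one
      with the Hintikka extension rule.
   The theorem follows: from either side we get invalidity, then the diagram
   H gives the other side by a single backward step along A -> H. *)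

(** * Paths and parts *)

Lemma sub_app pos A p q :
  sub pos A (p ++ q) =
  match sub pos A p with Some (B, b) => sub b B q | None => None end.
Proof.
  revert pos A; induction p as [|d p IH]; intros pos A; [destruct A; reflexivity|].
  destruct d, A; try destruct pos; simpl; try apply IH; reflexivity.
Qed.

Lemma sub_nil pos X : sub pos X [] = Some (X, pos).
Proof. destruct X; reflexivity. Qed.

Fixpoint fsize (F : formula) : nat :=
  match F with Eps _ _ => 1 | Or A B => S (fsize A + fsize B) | Not A => S (fsize A) end.

Lemma sub_shrinks r : forall pos X Y b,
  sub pos X r = Some (Y, b) -> r = [] \/ fsize Y < fsize X.
Proof.
  induction r as [|d r IH]; intros pos X Y b H; [left; reflexivity|right].
  destruct d, X; simpl in H; try destruct pos; try discriminate;
  destruct (IH _ _ _ _ H) as [->|Hl]; try rewrite sub_nil in H; simpl in *;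
  try (injection H; intros; subst); simpl; lia.
Qed.

Lemma is_prefix_app p : forall q, is_prefix p q -> exists r, q = p ++ r.
Proof.
  induction p as [|d p IH]; intros q H; [exists q; reflexivity|].
  destruct q as [|e q]; simpl in H; [contradiction|]. destruct H as [-> H].
  destruct (IH _ H) as [r ->]. exists r; reflexivity.
Qed.

(* Two nested occurrences of the same formula are the same occurrence, hence
   they have the same polarity. *)
Lemma nested_same_polarity F p q X b1 b2 :
  sub true F p = Some (X, b1) -> sub true F q = Some (X, b2) ->
  is_prefix p q -> b1 = b2.
Proof.
  intros Hp Hq Hpre. destruct (is_prefix_app _ _ Hpre) as [r ->].
  rewrite sub_app, Hp in Hq. destruct (sub_shrinks _ _ _ _ _ Hq) as [->|Hl].
  - rewrite sub_nil in Hq. congruence.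
  - lia.
Qed.

Lemma sub_snoc F p X b d :
  sub true F p = Some (X, b) -> sub true F (p ++ [d]) = sub b X [d].
Proof. intros Hp; rewrite sub_app, Hp; reflexivity. Qed.

Lemma pos_part_or_l F B C : pos_part F (Or B C) -> pos_part F B.
Proof. intros [p Hp]; exists (p ++ [dL]); rewrite (sub_snoc _ _ _ _ _ Hp); apply sub_nil. Qed.
Lemma pos_part_or_r F B C : pos_part F (Or B C) -> pos_part F C.
Proof. intros [p Hp]; exists (p ++ [dR]); rewrite (sub_snoc _ _ _ _ _ Hp); apply sub_nil. Qed.
Lemma pos_part_not F B : pos_part F (Not B) -> neg_part F B.
Proof. intros [p Hp]; exists (p ++ [dN]); rewrite (sub_snoc _ _ _ _ _ Hp); apply sub_nil. Qed.
Lemma neg_part_not F B : neg_part F (Not B) -> pos_part F B.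
Proof. intros [p Hp]; exists (p ++ [dN]); rewrite (sub_snoc _ _ _ _ _ Hp); apply sub_nil. Qed.

(** * Admissible valuations and soundness of H *)

Definition admissible (v : name -> name -> bool) : Prop :=
  (forall a b, v a b = true -> v a a = true) /\
  (forall a b c, v a b = true -> v b c = true -> v a c = true) /\
  (forall a b, v a b = true -> v b b = true -> v b a = true).

Definition invalid (A : formula) : Prop := exists v, admissible v /\ eval v A = false.

Lemma eval_imp v A B : eval v (Imp A B) = negb (eval v A) || eval v B.
Proof. reflexivity. Qed.

Lemma provH_sound A : provH A -> forall v, admissible v -> eval v A = true.
Proof.
  induction 1 as [A Ht|a b|a b c|a b|A B _ IHAB _ IHA]; intros v Hv;
    destruct Hv as [h1 [h2 h3]]; unfold Imp, And; simpl.
  - apply Ht.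
  - destruct (v a b) eqn:E; simpl; eauto.
  - destruct (v a b) eqn:E1, (v b c) eqn:E2; simpl; eauto.
  - destruct (v a b) eqn:E1, (v b b) eqn:E2; simpl; eauto.
  - specialize (IHAB v (conj h1 (conj h2 h3))). specialize (IHA v (conj h1 (conj h2 h3))).
    rewrite eval_imp, IHA in IHAB. exact IHAB.
Qed.

Lemma invalid_back A B : provH (Imp A B) -> invalid B -> invalid A.
Proof.
  intros HAB [v [Hv HB]]. exists v; split; [exact Hv|].
  pose proof (provH_sound _ HAB v Hv) as E.
  rewrite eval_imp, HB, orb_false_r in E. apply negb_true_iff, E.
Qed.

Lemma eval_subst v s B : eval v (subst s B) = eval (fun x y => v (s x) (s y)) B.
Proof. induction B; simpl; congruence. Qed.

(** * The canonical valuation of a Hintikka formula *)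

Definition canon (F : formula) : name -> name -> bool :=
  fun x y => if excluded_middle_informative (neg_part F (Eps x y)) then true else false.

Lemma canon_spec F x y : canon F x y = true <-> neg_part F (Eps x y).
Proof.
  unfold canon; destruct (excluded_middle_informative _); split; intro;
    auto; try discriminate; contradiction.
Qed.

Lemma hintikka_parts_eval F : hintikka F -> forall X,
  (pos_part F X -> eval (canon F) X = false) /\
  (neg_part F X -> eval (canon F) X = true).
Proof.
  intros [hpn [hor _]] X.
  induction X as [a b|X1 IH1 X2 IH2|X IH]; split; intro Hx; simpl.
  - destruct (canon F a b) eqn:E; [exfalso|reflexivity].
    apply canon_spec in E. destruct Hx as [p Hp], E as [q Hq].
    apply hpn. exists (Eps a b), p, q. repeat split; [exact Hp|exact Hq| |].
    + intro Hpre; discriminate (nested_same_polarity _ _ _ _ _ _ Hp Hq Hpre).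
    + intro Hpre; discriminate (nested_same_polarity _ _ _ _ _ _ Hq Hp Hpre).
  - apply canon_spec, Hx.
  - rewrite (proj1 IH1 (pos_part_or_l _ _ _ Hx)), (proj1 IH2 (pos_part_or_r _ _ _ Hx)).
    reflexivity.
  - destruct (hor _ _ Hx) as [H1|H1].
    + rewrite (proj2 IH1 H1); reflexivity.
    + rewrite (proj2 IH2 H1), orb_true_r; reflexivity.
  - rewrite (proj2 IH (pos_part_not _ _ Hx)); reflexivity.
  - rewrite (proj1 IH (neg_part_not _ _ Hx)); reflexivity.
Qed.

Lemma hintikka_invalid F : hintikka F -> admissible (canon F) /\ eval (canon F) F = false.
Proof.
  intros Hh. pose proof Hh as [_ [_ [h3 [h4 h5]]]]. split.
  - repeat split; intros *; rewrite !canon_spec; eauto.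
  - apply (hintikka_parts_eval F Hh). exists []. apply sub_nil.
Qed.

Lemma provHL1_invalid A : provHL1 A -> invalid A.
Proof.
  induction 1 as [A Hh|A B HAB _ IH].
  - exists (canon A). apply hintikka_invalid, Hh.
  - exact (invalid_back _ _ HAB IH).
Qed.

Lemma refH_invalid a0 A : refH a0 A -> invalid A.
Proof.
  induction 1 as [ | | A B HAB _ IH | A B s _ IH E | A a b Hh _ _ _ Hn].
  - exists (fun _ _ => false). split; [repeat split; discriminate|reflexivity].
  - exists (fun _ _ => true). split; [repeat split|]; reflexivity.
  - exact (invalid_back _ _ HAB IH).
  - destruct IH as [v [[h1 [h2 h3]] Hv]]. exists (fun x y => v (s x) (s y)). split.
    + repeat split; intros *; eauto.
    + rewrite <- eval_subst, <- E; exact Hv.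
  - destruct (hintikka_invalid A Hh) as [Hadm Hv]. exists (canon A). split; [exact Hadm|].
    simpl. rewrite Hv. destruct (canon A a b) eqn:E; [|reflexivity].
    exfalso; apply Hn, canon_spec, E.
Qed.

Fixpoint lits (F : formula) : list formula :=
  match F with Or A B => lits A ++ lits B | _ => [F] end.

Lemma eval_lits w F : eval w F = existsb (eval w) (lits F).
Proof. induction F; simpl; rewrite ?orb_false_r, ?existsb_app; congruence. Qed.

Lemma sub_lit_disj F : lit_disj F -> forall p X b, sub true F p = Some (X, b) ->
  (b = false -> exists a c, X = Eps a c /\ In (Not (Eps a c)) (lits F)) /\
  (forall a c, X = Eps a c -> b = true -> In (Eps a c) (lits F)).
Proof.
  induction 1 as [L [a c|a c]|A B _ IHA _ IHB]; intros p X b Hs.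
  - destruct p as [|[] p]; simpl in Hs; try discriminate.
    injection Hs as <- <-. split; [discriminate|]. intros a' c' E _; left; congruence.
  - destruct p as [|[] p]; simpl in Hs; try discriminate.
    + injection Hs as <- <-. split; [discriminate|]. intros; discriminate.
    + destruct p as [|[] p]; simpl in Hs; try discriminate.
      injection Hs as <- <-. split; [|intros; discriminate].
      intros _. exists a, c. simpl; auto.
  - destruct p as [|[] p]; simpl in Hs; try discriminate.
    + injection Hs as <- <-. split; [discriminate|]. intros; discriminate.
    + destruct (IHA _ _ _ Hs) as [h1 h2]. split.
      * intro Hb. destruct (h1 Hb) as [a [c [E Hi]]]. exists a, c. simpl; auto using in_or_app.
      * intros a c E Hb. simpl. apply in_or_app; left; eauto.
    + destruct (IHB _ _ _ Hs) as [h1 h2]. split.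
      * intro Hb. destruct (h1 Hb) as [a [c [E Hi]]]. exists a, c. simpl; auto using in_or_app.
      * intros a c E Hb. simpl. apply in_or_app; right; eauto.
Qed.

Lemma neg_part_lit_disj_atom F X : lit_disj F -> neg_part F X -> exists a c, X = Eps a c.
Proof.
  intros HF [p Hp]. destruct (proj1 (sub_lit_disj F HF p X false Hp) eq_refl) as [a [c [E _]]].
  eauto.
Qed.

Lemma neg_part_lit_disj F a c : lit_disj F ->
  neg_part F (Eps a c) <-> In (Not (Eps a c)) (lits F).
Proof.
  intros HF; split.
  - intros [p Hp]. destruct (proj1 (sub_lit_disj F HF p _ false Hp) eq_refl) as [a' [c' [E Hi]]].
    injection E as -> ->. exact Hi.
  - induction HF as [L [a' c'|a' c']|A B HA IHA HB IHB]; simpl; intros Hi.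
    + destruct Hi as [E|[]]; discriminate.
    + destruct Hi as [E|[]]. injection E as -> ->. exists [dN]; reflexivity.
    + apply in_app_or in Hi. destruct Hi as [Hi|Hi].
      * destruct (IHA Hi) as [p Hp]. exists (dL :: p). exact Hp.
      * destruct (IHB Hi) as [p Hp]. exists (dR :: p). exact Hp.
Qed.

Definition hintikka_set (L : list formula) : Prop :=
  (forall a b, In (Not (Eps a b)) L -> In (Eps a b) L -> False) /\
  (forall a b, In (Not (Eps a b)) L -> In (Not (Eps a a)) L) /\
  (forall a b c, In (Not (Eps a b)) L -> In (Not (Eps b c)) L -> In (Not (Eps a c)) L) /\
  (forall a b, In (Not (Eps a b)) L -> In (Not (Eps b b)) L -> In (Not (Eps b a)) L).

Lemma lit_disj_hintikka F : lit_disj F -> hintikka_set (lits F) -> hintikka F.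
Proof.
  intros HF [g1 [g2 [g3 g4]]].
  pose proof (fun a c => neg_part_lit_disj F a c HF) as Hne.
  repeat split.
  - intros [B [p [q [Hp [Hq _]]]]].
    destruct (proj1 (sub_lit_disj F HF q B false Hq) eq_refl) as [a [c [-> Hi]]].
    exact (g1 a c Hi (proj2 (sub_lit_disj F HF p _ true Hp) a c eq_refl eq_refl)).
  - intros B C Hn. destruct (neg_part_lit_disj_atom F _ HF Hn) as [? [? E]]; discriminate.
  - intros a b. rewrite !Hne. apply g2.
  - intros a b c. rewrite !Hne. apply g3.
  - intros a b. rewrite !Hne. apply g4.
Qed.

(** * Refuting disjunctions of literals in HAR *)

Definition pos_lit (x : name * name) : formula := Eps (fst x) (snd x).
Definition neg_lit (x : name * name) : formula := Not (Eps (fst x) (snd x)).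

Definition disj (g : name * name -> formula) (l : list (name * name)) (base : formula) :=
  fold_left (fun F x => Or F (g x)) l base.

Lemma lits_disj g l : forall base, (forall x, lits (g x) = [g x]) ->
  lits (disj g l base) = lits base ++ map g l.
Proof.
  unfold disj. induction l as [|x l IH]; intros base Hg; simpl.
  - rewrite app_nil_r; reflexivity.
  - rewrite IH by exact Hg. simpl. rewrite Hg, <- app_assoc. reflexivity.
Qed.

Lemma lit_disj_disj g l : forall base, (forall x, literal (g x)) ->
  lit_disj base -> lit_disj (disj g l base).
Proof.
  unfold disj; induction l as [|x l IH]; intros base Hg Hb; simpl; auto.
  apply IH; auto. apply ld_or; auto. apply ld_lit; auto.
Qed.

Lemma not_in_pos_lits l a b : ~ In (Not (Eps a b)) (map pos_lit l).
Proof. intro H. apply in_map_iff in H. destruct H as [x [E _]]. discriminate. Qed.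

Lemma hintikka_set_drop_pos L l : hintikka_set (L ++ map pos_lit l) -> hintikka_set L.
Proof.
  intros [g1 [g2 [g3 g4]]].
  assert (R : forall a b, In (Not (Eps a b)) (L ++ map pos_lit l) -> In (Not (Eps a b)) L).
  { intros a b Hi. apply in_app_or in Hi. destruct Hi as [Hi|Hi]; auto.
    exfalso; eapply not_in_pos_lits; eauto. }
  repeat split; intros *; intros; [eapply g1| apply R; eapply g2 | apply R; eapply g3
                                   | apply R; eapply g4]; eauto using in_or_app.
Qed.

Lemma refH_extend a0 l : forall F, refH a0 F -> lit_disj F ->
  hintikka_set (lits F ++ map pos_lit l) -> refH a0 (disj pos_lit l F).
Proof.
  induction l as [|[x1 x2] l IH]; intros F HR HF Hg; [exact HR|].
  apply IH.
  - apply R_ext; [| exact HF | exact HR |].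
    + apply lit_disj_hintikka; [exact HF|]. exact (hintikka_set_drop_pos _ _ Hg).
    + rewrite neg_part_lit_disj by exact HF. intro Hi.
      apply (proj1 Hg x1 x2); apply in_or_app; [left; exact Hi | right; left; reflexivity].
  - apply ld_or; [exact HF|]. apply ld_lit; constructor.
  - simpl. rewrite <- app_assoc. exact Hg.
Qed.

(* A single positive literal is refutable: eps c c follows from it in H. *)
Lemma refH_pos_lit a0 c d : refH a0 (Eps c d).
Proof.
  apply R_mp with (Eps c c); [apply H_ax1|].
  apply R_subst with (Eps a0 a0) (fun _ => a0); [apply R_ax1|reflexivity].
Qed.

(* A disjunction of negative literals is refutable: identifying all names
   with a0 turns it into a formula implied by ~ eps a0 a0. *)
Lemma refH_neg_lits a0 n0 nr : refH a0 (disj neg_lit nr (neg_lit n0)).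
Proof.
  set (D := disj neg_lit nr (neg_lit n0)).
  apply R_subst with (subst (fun _ => a0) D) (fun _ => a0); [|reflexivity].
  apply R_mp with (Not (Eps a0 a0)); [|apply R_ax2].
  apply H_taut. intro w. rewrite eval_imp. simpl (eval w (Not _)).
  destruct (w a0 a0) eqn:E; simpl; [|apply orb_true_r].
  rewrite eval_subst, eval_lits, orb_false_r, negb_true_iff.
  unfold D. rewrite lits_disj by reflexivity.
  apply not_true_iff_false. rewrite existsb_exists. intros [X [HX HXtrue]].
  change (lits (neg_lit n0) ++ map neg_lit nr) with (map neg_lit (n0 :: nr)) in HX.
  apply in_map_iff in HX. destruct HX as [x [<- _]]. simpl in HXtrue.
  rewrite E in HXtrue. discriminate.
Qed.

(* Every non-empty Hintikka set of literals is the literal list of a refutable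
   disjunction: negative literals first, positive literals added by extension. *)
Lemma refutable_lit_disj a0 (Negs Poss : list (name * name)) :
  Negs <> [] \/ Poss <> [] ->
  hintikka_set (map neg_lit Negs ++ map pos_lit Poss) ->
  exists H, lit_disj H /\ lits H = map neg_lit Negs ++ map pos_lit Poss /\ refH a0 H.
Proof.
  intros Hne Hg.
  assert (Hlit : forall x, literal (neg_lit x)) by (intros; constructor).
  assert (Hlitp : forall x, literal (pos_lit x)) by (intros; constructor).
  destruct Negs as [|n0 nr].
  - destruct Poss as [|p0 pr]; [destruct Hne; congruence|].
    exists (disj pos_lit pr (pos_lit p0)). repeat split.
    + apply lit_disj_disj; auto using ld_lit.
    + rewrite lits_disj by reflexivity. reflexivity.
    + apply refH_extend; [apply refH_pos_lit | apply ld_lit, Hlitp | exact Hg].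
  - set (D := disj neg_lit nr (neg_lit n0)).
    assert (HD : lits D = map neg_lit (n0 :: nr)) by (apply lits_disj; reflexivity).
    assert (HDl : lit_disj D) by (apply lit_disj_disj; auto using ld_lit).
    exists (disj pos_lit Poss D). repeat split.
    + apply lit_disj_disj; auto.
    + rewrite lits_disj by reflexivity. rewrite HD. reflexivity.
    + apply refH_extend; [apply refH_neg_lits | exact HDl | rewrite HD; exact Hg].
Qed.

(** * The diagram of a falsifying valuation *)

Fixpoint names (F : formula) : list name :=
  match F with Eps a b => [a; b] | Or A B => names A ++ names B | Not A => names A end.

Lemma eval_names w v F :
  (forall a b, In a (names F) -> In b (names F) -> w a b = v a b) -> eval w F = eval v F.
Proof.
  induction F as [a b|A IHA B IHB|A IHA]; intros H; simpl.
  - apply H; simpl; auto.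
  - rewrite IHA, IHB; auto; intros a b Ha Hb; apply H; apply in_or_app; auto.
  - apply f_equal, IHA, H.
Qed.

Lemma names_nonempty F : exists a, In a (names F).
Proof.
  induction F as [a b|A [a Ha] B _|A IH]; simpl; eauto.
  exists a; apply in_or_app; auto.
Qed.

Section Diagram.
Variable v : name -> name -> bool.
Variable ns : list name.

Definition true_pairs : list (name * name) :=
  filter (fun x => v (fst x) (snd x)) (list_prod ns ns).
Definition false_pairs : list (name * name) :=
  filter (fun x => negb (v (fst x) (snd x))) (list_prod ns ns).

Definition diagram : list formula := map neg_lit true_pairs ++ map pos_lit false_pairs.

Lemma diagram_neg a b :
  In (Not (Eps a b)) diagram <-> In a ns /\ In b ns /\ v a b = true.
Proof.
  unfold diagram, true_pairs. rewrite in_app_iff. split.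
  - intros [Hi|Hi]; [|exfalso; eapply not_in_pos_lits; eauto].
    apply in_map_iff in Hi. destruct Hi as [[x y] [E Hi]]. injection E as -> ->.
    rewrite filter_In, in_prod_iff in Hi. simpl in Hi. tauto.
  - intros H. left. change (Not (Eps a b)) with (neg_lit (a, b)). apply in_map.
    rewrite filter_In, in_prod_iff. simpl. tauto.
Qed.

Lemma diagram_pos a b :
  In (Eps a b) diagram <-> In a ns /\ In b ns /\ v a b = false.
Proof.
  unfold diagram, false_pairs. rewrite in_app_iff, <- negb_true_iff. split.
  - intros [Hi|Hi]; apply in_map_iff in Hi; destruct Hi as [[x y] [E Hi]]; [discriminate|].
    injection E as -> ->. rewrite filter_In, in_prod_iff in Hi. simpl in Hi. tauto.
  - intros H. right. change (Eps a b) with (pos_lit (a, b)). apply in_map.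
    rewrite filter_In, in_prod_iff. simpl. tauto.
Qed.

Lemma diagram_hintikka_set : admissible v -> hintikka_set diagram.
Proof.
  intros [h1 [h2 h3]]. repeat split; intros *; rewrite ?diagram_neg, ?diagram_pos.
  - intros [_ [_ E1]] [_ [_ E2]]. congruence.
  - intros [Ha [_ E]]. eauto.
  - intros [Ha [Hb E1]] [_ [Hc E2]]. eauto.
  - intros [Ha [Hb E1]] [_ [_ E2]]. eauto.
Qed.

(* Any disjunction of the diagram literals is false under w only if w agrees
   with v on ns; so A -> H is a tautology whenever v falsifies A. *)
Lemma diagram_implied A H :
  (forall a, In a (names A) -> In a ns) -> eval v A = false ->
  lits H = diagram -> tautology (Imp A H).
Proof.
  intros Hns HA HH w. rewrite eval_imp.
  destruct (eval w H) eqn:EH; [apply orb_true_r|]. rewrite orb_false_r.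
  assert (Hfalse : forall X, In X diagram -> eval w X = false).
  { intros X Hi. rewrite eval_lits, HH in EH. destruct (eval w X) eqn:EX; [|reflexivity].
    rewrite <- EH. symmetry. apply existsb_exists. eauto. }
  rewrite (eval_names w v A), HA; [reflexivity|].
  intros a b Ha Hb. apply Hns in Ha, Hb. destruct (v a b) eqn:E.
  - pose proof (Hfalse (Not (Eps a b)) (proj2 (diagram_neg a b) (conj Ha (conj Hb E)))).
    simpl in *. destruct (w a b); auto.
  - exact (Hfalse (Eps a b) (proj2 (diagram_pos a b) (conj Ha (conj Hb E)))).
Qed.

End Diagram.

Lemma invalid_diagram a0 A : invalid A ->
  exists H, hintikka H /\ refH a0 H /\ tautology (Imp A H).
Proof.
  intros [v [Hadm HA]].
  set (ns := names A).
  assert (Hnn : true_pairs v ns <> [] \/ false_pairs v ns <> []).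
  { destruct (names_nonempty A) as [a Ha].
    destruct (v a a) eqn:E; [left|right]; intro Z.
    - assert (Hi : In (a, a) (true_pairs v ns))
        by (unfold true_pairs; rewrite filter_In, in_prod_iff; simpl; auto).
      rewrite Z in Hi; exact Hi.
    - assert (Hi : In (a, a) (false_pairs v ns))
        by (unfold false_pairs; rewrite filter_In, in_prod_iff; simpl; rewrite E; auto).
      rewrite Z in Hi; exact Hi. }
  pose proof (diagram_hintikka_set v ns Hadm) as Hg.
  destruct (refutable_lit_disj a0 _ _ Hnn Hg) as [H [HHl [HHlits HHr]]].
  exists H. split; [|split].
  - apply lit_disj_hintikka; [exact HHl|]. rewrite HHlits. exact Hg.
  - exact HHr.
  - apply (diagram_implied v ns); auto.
Qed.

Theorem theorem9p3 (a0 : name) (A : formula) : provHL1 A <-> refH a0 A.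
Proof.
  split; intro HA.
  - destruct (invalid_diagram a0 A (provHL1_invalid A HA)) as [H [_ [HR Ht]]].
    exact (R_mp a0 A H (H_taut _ Ht) HR).
  - destruct (invalid_diagram a0 A (refH_invalid a0 A HA)) as [H [Hh [_ Ht]]].
    exact (HL1_back A H (H_taut _ Ht) (HL1_hint H Hh)).
Qed.
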